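(* Let $A_S$ be a parabolic-retractable Artin group with Coxeter matrix $(m_{s,t})_{s,t\in S}$, and let $a,b,c\in S$ be pairwise distinct with $m_{a,b}$, $m_{a,c}$ and $m_{b,c}$ all odd. Then, up to permuting $a,b,c$, one has $m_{a,b}=m_{a,c}$ and $m_{b,c}$ divides $m_{a,b}$.
   Context: A Coxeter matrix over a finite set $S$ is a matrix $M=(m_{s,t})_{s,t\in S}$ with entries in $\mathbb{N}\cup\{\infty\}$, $m_{s,s}=1$, and $m_{s,t}=m_{t,s}\ge 2$ for $s\neq t$. Write $\Pi(s,t,m)$ for the alternating word $sts\cdots$ of length $m$. The Artin group is $A_S=\langle S\mid \Pi(s,t,m_{s,t})=\Pi(t,s,m_{s,t})$ for $s\neq t$, $m_{s,t}\neq\infty\rangle$. For $X\subseteq S$, $A_X$ is the subgroup generated by $X$. A retraction of $G$ onto a subgroup $H$ is a homomorphism $\varphi:G\to H$ with $\varphi|_H=\mathrm{id}_H$. $A_S$ is parabolic-retractable if it admits a retraction onto $A_X$ for every $X\subseteq S$. ''Odd'' means a finite odd integer. *)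

From mathcomp Require Import all_boot.
Set Implicit Arguments. Unset Strict Implicit. Unset Printing Implicit Defensive.

(* Coxeter matrix over a finite set S; entries in N ∪ {∞}, with None = ∞. *)
Record coxeter_matrix (S : finType) := CoxeterMatrix {
  cm :> S -> S -> option nat;
  cm_diag : forall s, cm s s = Some 1;
  cm_sym : forall s t, cm s t = cm t s;
  cm_offdiag : forall s t, s != t -> forall k, cm s t = Some k -> 2 <= k
}.

(* Words in S ∪ S^{-1}: a letter (s, false) is s, (s, true) is s^{-1}. *)
Definition word (S : finType) := seq (S * bool).

Definition Pi (S : finType) (s t : S) (m : nat) : word S :=
  mkseq (fun i => if odd i then (t, false) else (s, false)) m.

(* The congruence on words defining the Artin group A_S: generated by free
   cancellation and the Artin relations Π(s,t,m) = Π(t,s,m) (m finite, s≠t). *)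
Inductive artin_eq (S : finType) (M : coxeter_matrix S) : word S -> word S -> Prop :=
| ae_refl w : artin_eq M w w
| ae_sym u v : artin_eq M u v -> artin_eq M v u
| ae_trans u v w : artin_eq M u v -> artin_eq M v w -> artin_eq M u w
| ae_ctx p q u v : artin_eq M u v -> artin_eq M (p ++ u ++ q) (p ++ v ++ q)
| ae_cancel s b : artin_eq M [:: (s, b); (s, ~~ b)] [::]
| ae_rel s t k : s != t -> M s t = Some k -> artin_eq M (Pi s t k) (Pi t s k).

Definition in_parabolic (S : finType) (M : coxeter_matrix S) (X : {set S})
  (w : word S) : Prop :=
  exists w' : word S, all (fun l => l.1 \in X) w' /\ artin_eq M w w'.

Definition has_retraction (S : finType) (M : coxeter_matrix S) (X : {set S}) : Prop :=
  exists phi : word S -> word S,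
    [/\ forall u v, artin_eq M u v -> artin_eq M (phi u) (phi v),
        forall u v, artin_eq M (phi (u ++ v)) (phi u ++ phi v),
        forall w, in_parabolic M X (phi w)
      & forall w, in_parabolic M X w -> artin_eq M (phi w) w].

Definition parabolic_retractable (S : finType) (M : coxeter_matrix S) : Prop :=
  forall X : {set S}, has_retraction M X.

From mathcomp Require Import all_boot all_algebra algC cyclotomic.
From mathcomp Require Import ring zify.
Set Implicit Arguments. Unset Strict Implicit. Unset Printing Implicit Defensive.
Import GRing.Theory Num.Theory.
Local Open Scope ring_scope.

(* Let phi be a retraction onto A_{x,y} and W a word in x, y representing phi(z).
   Applying phi to the Artin relations between z and x, y shows that W satisfies the braid
   relations of lengths p = m_xz with x and n = m_yz with y, and that W has exponent sum 1.
   For a parameter r, a representation of A_S on C^S (a deformation of the Tits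
   representation, with q = r^2) gives on the span of e_x, e_y the 2 x 2 matrices A, B of
   x, y and X of W.  In M_2, two braid relations of odd length leave two possibilities:
   either X = A, and then the relation with B makes (q^-1 A B)^n scalar, which forces
   m_xy | n; or (q^-1 A X)^p is scalar.  In the second case, for r = 2, 3, ..., the trace
   of q^-1 A X lies in the finite zero set of a fixed polynomial; being a rational function
   of r, it is constant.  At r = zeta, a primitive 2 m_xy-th root of unity, every generator
   fixes (1, 1), which pins the trace to zeta^2 + zeta^-2, and then m_xy | p.  Hence each
   of m_ab, m_ac, m_bc divides one of the other two, which gives the claim. *)

Section Alternate.
Variables (T : Type) (idx : T) (op : Monoid.law idx).

Fixpoint alternate (x y : T) (k : nat) : T :=
  if k is k'.+1 then op x (alternate y x k') else idx.

Lemma alternateD x y i j :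
  alternate x y (i + j) =
  op (alternate x y i) (alternate (if odd i then y else x) (if odd i then x else y) j).
Proof.
elim: i x y => [|i IHi] x y /=; first by rewrite Monoid.mul1m.
by rewrite IHi Monoid.mulmA; case: (odd i).
Qed.

End Alternate.

Lemma alternate_morph (T T' : Type) (idx : T) (idx' : T')
    (op : Monoid.law idx) (op' : Monoid.law idx') (f : T -> T') :
    f idx = idx' -> {morph f : a b / op a b >-> op' a b} ->
  forall x y k, f (alternate op x y k) = alternate op' (f x) (f y) k.
Proof. by move=> f1 fM x y k; elim: k x y => [|k IHk] x y //=; rewrite fM IHk. Qed.

Section AlternateRing.
Variable R : pzRingType.
Implicit Types x y : R.

Lemma alternate_double x y l : alternate *%R x y l.*2 = (x * y) ^+ l.
Proof. by elim: l => [|l IHl] //=; rewrite exprS IHl mulrA. Qed.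

Lemma alternate_double_odd x y l : alternate *%R x y l.*2.+1 = (x * y) ^+ l * x.
Proof. by rewrite -addn1 alternateD odd_double alternate_double /= mulr1. Qed.

Lemma alternate_odd_comm x y k : odd k -> alternate *%R x y k = alternate *%R y x k ->
  GRing.comm x ((x * y) ^+ k) /\ GRing.comm y ((x * y) ^+ k).
Proof.
move=> ok braid.
have shift u v : alternate *%R u v k.+1 = alternate *%R u v k * v.
  by rewrite -addn1 alternateD ok /= mulr1.
have xD : x * alternate *%R x y k = alternate *%R x y k * y.
  by rewrite {1}braid -[x * _]/(alternate *%R x y k.+1) shift.
have yD : y * alternate *%R x y k = alternate *%R x y k * x.
  by rewrite -[y * _]/(alternate *%R y x k.+1) shift braid.
have D2 : (x * y) ^+ k = alternate *%R x y k * alternate *%R x y k.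
  by rewrite -alternate_double -addnn alternateD ok -braid.
by split; rewrite /GRing.comm D2 mulrA ?xD ?yD -mulrA ?xD ?yD mulrA.
Qed.

End AlternateRing.

Lemma alternate_comm_eq (R : unitRingType) (x y : R) l :
  GRing.comm x y -> x * y \is a GRing.unit ->
  alternate *%R x y l.*2.+1 = alternate *%R y x l.*2.+1 -> y = x.
Proof. by move=> xy u; rewrite !alternate_double_odd -xy => /(mulrI (unitrX l u)). Qed.

Section Mx2.
Variable R : comNzRingType.
Implicit Types (a b c d : R) (Y : 'M[R]_2).

Definition mx2 a b c d : 'M[R]_2 :=
  \matrix_(i, j) if i == 0 then (if j == 0 then a else b) else (if j == 0 then c else d).

Lemma mx2_eta Y : Y = mx2 (Y 0 0) (Y 0 1) (Y 1 0) (Y 1 1).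
Proof.
apply/matrixP => i j; rewrite mxE.
by case: i j => [[|[|]] //= ?] [[|[|]] //= ?]; congr (Y _ _); apply: val_inj.
Qed.

Lemma mx2_inj a b c d a' b' c' d' :
  mx2 a b c d = mx2 a' b' c' d' -> [/\ a = a', b = b', c = c' & d = d'].
Proof.
move=> /matrixP e.
by split; [move: (e 0 0) | move: (e 0 1) | move: (e 1 0) | move: (e 1 1)]; rewrite !mxE.
Qed.

Lemma mulmx2 a b c d a' b' c' d' : mx2 a b c d * mx2 a' b' c' d' =
  mx2 (a * a' + b * c') (a * b' + b * d') (c * a' + d * c') (c * b' + d * d').
Proof.
apply/matrixP => i j; rewrite !mxE !big_ord_recl big_ord0 !mxE /=.
by case: (i == 0); case: (j == 0); rewrite addr0.
Qed.

Lemma addmx2 a b c d a' b' c' d' :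
  mx2 a b c d + mx2 a' b' c' d' = mx2 (a + a') (b + b') (c + c') (d + d').
Proof. by apply/matrixP => i j; rewrite !mxE; case: (i == 0); case: (j == 0). Qed.

Lemma scalemx2 k a b c d : k *: mx2 a b c d = mx2 (k * a) (k * b) (k * c) (k * d).
Proof. by apply/matrixP => i j; rewrite !mxE; case: (i == 0); case: (j == 0). Qed.

Lemma scalar_mx2 k : k%:M = mx2 k 0 0 k.
Proof. by apply/matrixP => i j; rewrite !mxE; case: i j => [[|[|]] //= ?] [[|[|]] //= ?]. Qed.

Lemma det_mx2 a b c d : \det (mx2 a b c d) = a * d - b * c.
Proof.
rewrite (expand_det_row _ 0) !big_ord_recl big_ord0 /cofactor !det_mx11 !mxE /=.
by rewrite expr0 expr1; ring.
Qed.

Lemma tr_mx2 a b c d : \tr (mx2 a b c d) = a + d.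
Proof. by rewrite /mxtrace !big_ord_recl big_ord0 !mxE /= addr0. Qed.

Lemma comm_mx2 a b c d a' b' c' d' :
  GRing.comm (mx2 a b c d) (mx2 a' b' c' d') <->
  [/\ b * c' = b' * c, b * (d' - a') = b' * (d - a) & c * (a' - d') = c' * (a - d)].
Proof.
rewrite /GRing.comm !mulmx2; split.
  case/mx2_inj => e1 e2 e3 _; split; apply/eqP; rewrite -subr_eq0; apply/eqP.
  - by rewrite -[RHS](subrr (a * a' + b * c')) [X in _ = _ - X]e1; ring.
  - by rewrite -[RHS](subrr (a * b' + b * d')) [X in _ = _ - X]e2; ring.
  - by rewrite -[RHS](subrr (c * a' + d * c')) [X in _ = _ - X]e3; ring.
case=> e1 e2 e3; congr mx2; apply/eqP; rewrite -subr_eq0; apply/eqP.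
- by rewrite -[RHS](subrr (b * c')) [X in _ = _ - X]e1; ring.
- by rewrite -[RHS](subrr (b * (d' - a'))) [X in _ = _ - X]e2; ring.
- by rewrite -[RHS](subrr (c * (a' - d'))) [X in _ = _ - X]e3; ring.
- by rewrite -[RHS](subrr (b' * c)) -[X in _ = _ - X]e1; ring.
Qed.

Lemma is_scalar_mx2 a b c d : is_scalar_mx (mx2 a b c d) = [&& b == 0, c == 0 & a == d].
Proof.
apply/is_scalar_mxP/and3P => [[k] | [/eqP -> /eqP -> /eqP ->]].
  by rewrite scalar_mx2 => /mx2_inj [-> -> -> ->].
by exists d; rewrite scalar_mx2.
Qed.

Lemma mx2_cayley_hamilton Y : Y * Y = \tr Y *: Y - (\det Y)%:M.
Proof.
rewrite [Y]mx2_eta tr_mx2 det_mx2 mulmx2 scalemx2 scalar_mx2.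
by rewrite -scaleN1r scalemx2 addmx2; congr mx2; ring.
Qed.

Lemma tr_scalar_mx2 Y : is_scalar_mx Y -> \tr Y ^+ 2 = 4 * \det Y.
Proof. by case/is_scalar_mxP => k ->; rewrite mxtrace_scalar det_scalar; ring. Qed.

Lemma mx2_fix_ones a b c d :
  (mx2 a b c d *m const_mx 1 == const_mx 1 :> 'cV[R]_2) = (a + b == 1) && (c + d == 1).
Proof.
apply/eqP/andP => [/matrixP e | [/eqP ab /eqP cd]]; last first.
  apply/matrixP => i j; rewrite !mxE !big_ord_recl big_ord0 !mxE /= !mulr1 addr0.
  by case: (i == 0).
split; apply/eqP; [move: (e 0 0) | move: (e 1 0)].
  by rewrite !mxE !big_ord_recl big_ord0 !mxE /= !mulr1 addr0.
by rewrite !mxE !big_ord_recl big_ord0 !mxE /= !mulr1 addr0.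
Qed.

Lemma tr_mx2_fix_ones Y : Y *m const_mx 1 = const_mx 1 :> 'cV[R]_2 -> \tr Y = 1 + \det Y.
Proof.
rewrite [Y]mx2_eta tr_mx2 det_mx2 => /eqP; rewrite mx2_fix_ones => /andP [/eqP ab /eqP cd].
have -> : Y 0 1 = 1 - Y 0 0 by rewrite -ab; ring.
have -> : Y 1 0 = 1 - Y 1 1 by rewrite -cd; ring.
ring.
Qed.

End Mx2.

Section Mx2Field.
Variable F : fieldType.
Implicit Types (U V W : 'M[F]_2).

Lemma mx2_centralizer U V : ~~ is_scalar_mx U -> GRing.comm U V ->
  exists a b, V = a%:M + b *: U.
Proof.
rewrite [U]mx2_eta [V]mx2_eta is_scalar_mx2 comm_mx2.
set a := U 0 0; set b := U 0 1; set c := U 1 0; set d := U 1 1.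
set x := V 0 0; set y := V 0 1; set z := V 1 0; set w := V 1 1.
move=> nsc [e1 e2 e3].
have [b0 | b0] := eqVneq b 0; last first.
  exists (x - y / b * a), (y / b); rewrite scalar_mx2 scalemx2 addmx2; congr mx2.
  + by field.
  + by rewrite add0r mulfVK.
  + by rewrite add0r -[z](mulKf b0) e1; field.
  + by apply: (mulfI b0); rewrite -[w](subrK x) mulrDr e2; field.
have [c0 | c0] := eqVneq c 0; last first.
  exists (x - z / c * a), (z / c); rewrite scalar_mx2 scalemx2 addmx2; congr mx2.
  + by field.
  + by apply: (mulfI c0); rewrite [c * y]mulrC -e1; field.
  + by rewrite add0r mulfVK.
  + by apply: (mulfI c0); rewrite -[w](subrK x) -opprB mulrDr mulrN e3; field.
have ad : a - d != 0 by rewrite subr_eq0; move: nsc; rewrite b0 c0 !eqxx.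
have da : d - a != 0 by rewrite -opprB oppr_eq0.
exists (x - (x - w) / (a - d) * a), ((x - w) / (a - d)).
rewrite scalar_mx2 scalemx2 addmx2; congr mx2.
+ by field.
+ move/esym/eqP: e2; rewrite b0 mul0r mulf_eq0 (negbTE da) orbF => /eqP ->.
  by rewrite mulr0 addr0.
+ move/eqP: e3; rewrite c0 mul0r eq_sym mulf_eq0 (negbTE ad) orbF => /eqP ->.
  by rewrite mulr0 addr0.
+ by field.
Qed.

Lemma comm_mx2_trans U V W : ~~ is_scalar_mx U -> GRing.comm U V -> GRing.comm U W ->
  GRing.comm V W.
Proof.
move=> nsU /(mx2_centralizer nsU) [a [b ->]] UW; apply/commr_sym/commrD.
  exact: scalar_mxC.
by rewrite /GRing.comm -scalerAl -scalerAr UW.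
Qed.

Lemma is_scalar_mxZ n a (Y : 'M[F]_n) : is_scalar_mx Y -> is_scalar_mx (a *: Y).
Proof. by case/is_scalar_mxP => b ->; rewrite scale_scalar_mx scalar_mx_is_scalar. Qed.

End Mx2Field.

(* [cheb (2 cos a) n = sin (n a) / sin a], a Chebyshev polynomial of the second kind. *)
Fixpoint cheb (R : pzRingType) (t : R) (n : nat) : R :=
  match n with
  | 0 => 0
  | 1 => 1
  | (n'.+1 as n1).+1 => t * cheb t n1 - cheb t n'
  end.

Lemma chebSS (R : pzRingType) (t : R) n : cheb t n.+2 = t * cheb t n.+1 - cheb t n.
Proof. by []. Qed.

Lemma rmorph_cheb (R R' : pzRingType) (f : {rmorphism R -> R'}) t n :
  f (cheb t n) = cheb (f t) n.
Proof.
by elim/ltn_ind: n => -[|[|n]] IH; rewrite ?rmorph0 ?rmorph1 // !chebSS rmorphB rmorphM !IH.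
Qed.

Lemma cheb_two (R : comPzRingType) n : cheb (2 : R) n = n%:R.
Proof. by elim/ltn_ind: n => -[|[|n]] IH //; rewrite chebSS !IH // !mulrS; ring. Qed.

Lemma cheb_root_unity (F : fieldType) (w : F) n : w != 0 ->
  (w - w^-1) * cheb (w + w^-1) n = w ^+ n - w^-1 ^+ n.
Proof.
move=> w0; elim/ltn_ind: n => -[|[|n]] IH; first by rewrite mulr0 !expr0 subrr.
  by rewrite mulr1 !expr1.
by rewrite chebSS mulrBr mulrCA !IH // !exprS; field.
Qed.

Lemma cheb_root_unity_eq0 (F : fieldType) (w : F) n : w != w^-1 -> w ^+ n = w^-1 ^+ n ->
  cheb (w + w^-1) n = 0.
Proof.
move=> ww wn; have w0 : w != 0 by apply: contraNneq ww => ->; rewrite invr0.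
have : w - w^-1 != 0 by rewrite subr_eq0.
by move/mulfI; apply; rewrite cheb_root_unity // wn subrr mulr0.
Qed.

Lemma cheb_root_unity_odd (F : fieldType) (w : F) l : w != w^-1 -> w ^+ l.*2.+1 = 1 ->
  cheb (w + w^-1) l.+1 = - cheb (w + w^-1) l.
Proof.
move=> ww wl; have w0 : w != 0 by apply: contraNneq ww => ->; rewrite invr0.
have wlS : w ^+ l.+1 = (w ^+ l)^-1.
  by apply: (mulIf (expf_neq0 l w0)); rewrite mulVf ?expf_neq0 // -exprD addSn addnn.
have : w - w^-1 != 0 by rewrite subr_eq0.
by move/mulfI; apply; rewrite mulrN !cheb_root_unity // !exprVn wlS invrK opprB.
Qed.

Lemma primitive_root_sqr (F : fieldType) (z : F) k : (k.*2).-primitive_root z ->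
  k.-primitive_root (z ^+ 2).
Proof. by move=> pz; have := exp_prim_root pz 2; rewrite -muln2 gcdnMl mulnK. Qed.

Lemma primitive_root_neq_inv (F : fieldType) (w : F) m : m.-primitive_root w -> (2 < m)%N ->
  w != w^-1.
Proof.
move=> pw m2; have w0 : w != 0 by rewrite (prim_root_eq0 pw) -lt0n (leq_trans _ m2).
apply: contraTneq m2 => ww; rewrite -leqNgt dvdn_leq // (prim_order_dvd pw).
by rewrite expr2 {2}ww mulfV.
Qed.

Lemma cheb_pow_mx2 (R : comNzRingType) (Y : 'M[R]_2) n : \det Y = 1 ->
  Y ^+ n.+1 = cheb (\tr Y) n.+1 *: Y - (cheb (\tr Y) n)%:M.
Proof.
move=> detY; elim: n => [|n IHn]; first by rewrite expr1 /= scale1r raddf0 subr0.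
rewrite exprS IHn mulrBr -scalerAr mx2_cayley_hamilton detY chebSS -mulmxE mul_mx_scalar.
by rewrite scalerBr scalerA scalemx1 scalerBl mulrC addrAC.
Qed.

Lemma cheb_pow_scaled_mx2 (F : fieldType) (q : F) (X : 'M[F]_2) n :
  q != 0 -> \det (q^-1 *: X) = 1 ->
  X ^+ n.+1 = q ^+ n.+1 *: (cheb (\tr (q^-1 *: X)) n.+1 *: (q^-1 *: X)
                            - (cheb (\tr (q^-1 *: X)) n)%:M).
Proof. by move=> q0 dX; rewrite -cheb_pow_mx2 // -exprZn scalerA divff // scale1r. Qed.

Lemma scalar_pow_mx2 (F : fieldType) (Y : 'M[F]_2) n : \det Y = 1 ->
  is_scalar_mx (Y ^+ n.+1) -> cheb (\tr Y) n.+1 = 0 \/ is_scalar_mx Y.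
Proof.
move=> detY; rewrite cheb_pow_mx2 // => /is_scalar_mxP [a e].
have [-> | u0] := eqVneq (cheb (\tr Y) n.+1) 0; [by left | right].
move/eqP: e; rewrite subr_eq => /eqP /(congr1 ( *:%R (cheb (\tr Y) n.+1)^-1)).
by rewrite scalerK // -raddfD /= scale_scalar_mx => ->; apply: scalar_mx_is_scalar.
Qed.

Lemma dvdn_scalar_pow_mx2 (F : fieldType) (w : F) m (Y : 'M[F]_2) k :
  m.-primitive_root w -> (2 < m)%N -> odd m -> \det Y = 1 -> \tr Y = w + w^-1 ->
  is_scalar_mx (Y ^+ k) -> (m %| k)%N.
Proof.
move=> pw m2 om detY trY; case: k => [|k] // scY.
have w0 : w != 0 by rewrite (prim_root_eq0 pw) -lt0n (leq_trans _ m2).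
have ww := primitive_root_neq_inv pw m2.
case: (scalar_pow_mx2 detY scY) => [| /tr_scalar_mx2].
  rewrite trY => /(congr1 ( *%R (w - w^-1))); rewrite cheb_root_unity // mulr0 => /eqP.
  rewrite subr_eq0 exprVn -[_ == _](inj_eq (mulIf (expf_neq0 k.+1 w0))) mulVf ?expf_neq0 //.
  by rewrite -exprD addnn -(prim_order_dvd pw) -muln2 Gauss_dvdl // coprimen2.
rewrite detY trY => trsq; exfalso; move: ww; apply/negP; rewrite negbK -subr_eq0.
rewrite -sqrf_eq0 (_ : _ ^+ 2 = (w + w^-1) ^+ 2 - 4); last by field.
by rewrite trsq mulr1 subrr.
Qed.

Section DihedralMatrices.
Variables (R : comNzRingType) (q c : R).

Definition mxA : 'M[R]_2 := mx2 (- q) c 0 1.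
Definition mxB : 'M[R]_2 := mx2 1 0 c (- q).

Lemma det_mxA : \det mxA = - q.
Proof. by rewrite det_mx2; ring. Qed.

Lemma det_mxB : \det mxB = - q.
Proof. by rewrite det_mx2; ring. Qed.

End DihedralMatrices.

Lemma map_mx_mxA (R R' : comNzRingType) (f : {rmorphism R -> R'}) q c :
  map_mx f (mxA q c) = mxA (f q) (f c).
Proof.
apply/matrixP => i j; rewrite !mxE.
by case: (i == 0); case: (j == 0); rewrite ?rmorphN ?rmorph0 ?rmorph1.
Qed.

Lemma map_mx_mxB (R R' : comNzRingType) (f : {rmorphism R -> R'}) q c :
  map_mx f (mxB q c) = mxB (f q) (f c).
Proof.
apply/matrixP => i j; rewrite !mxE.
by case: (i == 0); case: (j == 0); rewrite ?rmorphN ?rmorph0 ?rmorph1.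
Qed.

Section DihedralRep.
Variables (F : fieldType) (q c : F).
Local Notation mxA := (mxA q c).
Local Notation mxB := (mxB q c).

Lemma comm_mxAB : GRing.comm mxA mxB -> c = 0.
Proof. by case/comm_mx2 => /eqP; rewrite mul0r mulf_eq0 orbb => /eqP. Qed.

Hypothesis q0 : q != 0.

Lemma mxA_unit : mxA \is a GRing.unit.
Proof. by rewrite unitmxE det_mxA unitfE oppr_eq0. Qed.

Lemma mxB_unit : mxB \is a GRing.unit.
Proof. by rewrite unitmxE det_mxB unitfE oppr_eq0. Qed.

Lemma det_scaled_mxAB : \det (q^-1 *: (mxA * mxB)) = 1.
Proof. by rewrite detZ detM det_mxA det_mxB; field. Qed.

Lemma det_scaled_mxBA : \det (q^-1 *: (mxB * mxA)) = 1.
Proof. by rewrite detZ detM det_mxA det_mxB; field. Qed.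

Lemma tr_scaled_mxAB : \tr (q^-1 *: (mxA * mxB)) = c ^+ 2 / q - 2.
Proof. by rewrite mulmx2 scalemx2 tr_mx2; field. Qed.

Lemma tr_scaled_mxBA : \tr (q^-1 *: (mxB * mxA)) = c ^+ 2 / q - 2.
Proof. by rewrite mulmx2 scalemx2 tr_mx2; field. Qed.

(* Both q^-1 A B and q^-1 B A have determinant 1 and trace w + w^-1 with w = z^2, so their
   powers are Chebyshev combinations of themselves and 1, with coefficients that vanish at
   the relevant roots of unity. *)
Lemma dihedral_braid z k : (2 <= k)%N -> (k.*2).-primitive_root z ->
  c ^+ 2 = q * (z + z^-1) ^+ 2 -> alternate *%R mxA mxB k = alternate *%R mxB mxA k.
Proof.
move=> k2 pz hc.
have z0 : z != 0 by rewrite (prim_root_eq0 pz) double_eq0 -lt0n (leq_trans _ k2).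
have pw := primitive_root_sqr pz; set w := z ^+ 2 in pw.
have zk : z ^+ k = -1.
  have /eqP := prim_expr_order pz; rewrite -muln2 exprM sqrf_eq1 => /orP [|/eqP //].
  by rewrite -(prim_order_dvd pz) => /dvdn_leq; lia.
have [k2e | kn2] := eqVneq k 2%N.
  have zV : z^-1 = - z by apply: (mulfI z0); rewrite mulfV // mulrN -expr2 -k2e zk opprK.
  move/eqP: hc; rewrite zV subrr expr0n mulr0 sqrf_eq0 => /eqP c0.
  by rewrite k2e /= /mxA /mxB c0 !mulr1 !mulmx2; congr mx2; ring.
have ww : w != w^-1 by apply: primitive_root_neq_inv pw _; rewrite ltn_neqAle eq_sym kn2.
have trw : c ^+ 2 / q - 2 = w + w^-1 by rewrite hc /w; field; rewrite z0 q0.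
set t := c ^+ 2 / q - 2 in trw.
move: (odd_double_half k); case: (odd k); rewrite ?add1n ?add0n => hk; rewrite -hk.
- have [l hl] : exists l, k./2 = l.+1 by case: (k./2) hk => [|l] hk; [lia | exists l].
  have wk : w ^+ (k./2).*2.+1 = 1 by rewrite hk (prim_expr_order pw).
  have hU : cheb t l = (t + 1) * cheb t l.+1.
    move: (cheb_root_unity_odd ww wk); rewrite hl chebSS -trw => /eqP.
    rewrite -addr_eq0 => /eqP e; apply/eqP; rewrite -subr_eq0 -oppr_eq0 -[X in _ == X]e.
    by apply/eqP; ring.
  rewrite !alternate_double_odd hl !(cheb_pow_scaled_mx2 _ q0) ?det_scaled_mxAB ?det_scaled_mxBA //.
  rewrite tr_scaled_mxAB tr_scaled_mxBA -/t hU -!scalerAl; congr (_ *: _).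
  rewrite /t /mxA /mxB !mulmx2 !scalemx2 scalar_mx2 -!scaleN1r !scalemx2 !addmx2 !mulmx2.
  by congr mx2; field.
- have [l hl] : exists l, k./2 = l.+1 by case: (k./2) hk => [|l] hk; [lia | exists l].
  have U0 : cheb t (k./2) = 0.
    by rewrite trw cheb_root_unity_eq0 // exprVn /w -exprM mul2n hk zk invrN invr1.
  rewrite !alternate_double hl !(cheb_pow_scaled_mx2 _ q0) ?det_scaled_mxAB ?det_scaled_mxBA //.
  by rewrite tr_scaled_mxAB tr_scaled_mxBA -/t -hl U0 !scale0r.
Qed.

(* (A X)^p is the square of the odd braid element, hence commutes with A and X; if it is not
   scalar, A and X commute and the braid relation collapses to X = A. *)
Lemma odd_braid_dichotomy (X : 'M[F]_2) p n : c != 0 -> \det X = - q -> odd p -> odd n ->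
  alternate *%R mxA X p = alternate *%R X mxA p ->
  alternate *%R mxB X n = alternate *%R X mxB n ->
  is_scalar_mx ((q^-1 *: (mxA * X)) ^+ p) \/ is_scalar_mx ((q^-1 *: (mxA * mxB)) ^+ n).
Proof.
move=> c0 detX op on braidAX braidBX; rewrite !exprZn.
have [AU XU] := alternate_odd_comm op braidAX.
have [scU | nscU] := boolP (is_scalar_mx ((mxA * X) ^+ p)).
  by left; apply: is_scalar_mxZ.
right; apply: is_scalar_mxZ.
have AX := comm_mx2_trans nscU (commr_sym AU) (commr_sym XU).
have AXu : mxA * X \is a GRing.unit.
  by rewrite unitmxE detM det_mxA detX unitfE mulf_neq0 ?oppr_eq0.
move: braidAX braidBX; rewrite -(odd_double_half p) op.
move=> /(alternate_comm_eq AX AXu) -> braidBA.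
have [AV BV] := alternate_odd_comm on (esym braidBA).
apply: contraTT c0 => nscV; rewrite negbK; apply/eqP/comm_mxAB.
exact: comm_mx2_trans nscV (commr_sym AV) (commr_sym BV).
Qed.

Lemma dvdn_scalar_braid_power z m n : (m.*2).-primitive_root z -> (2 < m)%N -> odd m ->
  c ^+ 2 = q * (z + z^-1) ^+ 2 -> is_scalar_mx ((q^-1 *: (mxA * mxB)) ^+ n) -> (m %| n)%N.
Proof.
move=> pz m2 om hc.
apply: (dvdn_scalar_pow_mx2 (primitive_root_sqr pz) m2 om det_scaled_mxAB).
have z0 : z != 0 by rewrite (prim_root_eq0 pz) double_eq0 -lt0n (leq_trans _ m2).
by rewrite tr_scaled_mxAB hc; field; rewrite z0 q0.
Qed.

End DihedralRep.

Section Words.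
Variables (S : finType) (M : coxeter_matrix S).
Implicit Types (u v w : word S) (s t : S).

Definition word_on (X : {set S}) w := all (fun l : S * bool => l.1 \in X) w.

Lemma Pi_alternate s t k : Pi s t k = alternate cat [:: (s, false)] [:: (t, false)] k.
Proof.
elim: k s t => [|k IHk] s t //=; rewrite -IHk /Pi /mkseq /= -add1n iotaDl -map_comp.
by congr cons; apply: eq_map => i /=; rewrite add0n; case: (odd i).
Qed.

Lemma artin_eq_cat u u' v v' :
  artin_eq M u u' -> artin_eq M v v' -> artin_eq M (u ++ v) (u' ++ v').
Proof.
move=> eu ev; apply: (ae_trans (ae_ctx [::] v eu)).
by have := ae_ctx u' [::] ev; rewrite !cats0.
Qed.

Lemma artin_eq_alternate u u' v v' k : artin_eq M u u' -> artin_eq M v v' ->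
  artin_eq M (alternate cat u v k) (alternate cat u' v' k).
Proof.
elim: k u v u' v' => [|k IHk] u v u' v' eu ev /=; first exact: ae_refl.
by apply: artin_eq_cat => //; apply: IHk.
Qed.

Definition exponent_sum w : int := \sum_(l <- w) (-1) ^+ l.2.

Lemma word_on_Pi s t k : word_on [set s; t] (Pi s t k).
Proof. by apply/allP => l /mapP [i _ ->]; case: (odd i); rewrite /= in_set2 eqxx ?orbT. Qed.

Lemma word_on_alternate (X : {set S}) u v k :
  word_on X u -> word_on X v -> word_on X (alternate cat u v k).
Proof.
elim: k u v => [|k IHk] u v Xu Xv //=.
by rewrite /word_on all_cat; apply/andP; split; last exact: IHk.
Qed.

Lemma exponent_sum_cat u v : exponent_sum (u ++ v) = exponent_sum u + exponent_sum v.
Proof. exact: big_cat. Qed.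

Lemma exponent_sum_Pi s t k : exponent_sum (Pi s t k) = k%:Z.
Proof.
rewrite Pi_alternate (alternate_morph (big_nil _ _ _ _) exponent_sum_cat).
rewrite /exponent_sum !big_seq1 /=.
by elim: k {s t} => [|k IHk] //=; rewrite IHk intS.
Qed.

Lemma artin_eq_exponent_sum u v : artin_eq M u v -> exponent_sum u = exponent_sum v.
Proof.
elim=> {u v} [w | u v _ IH | u v w _ IH1 _ IH2 | p r u v _ IH | s b | s t k _ _] //.
- by rewrite IH1.
- by rewrite !exponent_sum_cat IH.
- by rewrite /exponent_sum !big_cons big_nil; case: b.
- by rewrite !exponent_sum_Pi.
Qed.

Lemma exponent_sum_braid_odd s W k : odd k ->
  artin_eq M (alternate cat [:: (s, false)] W k) (alternate cat W [:: (s, false)] k) ->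
  exponent_sum W = 1.
Proof.
move=> ok /artin_eq_exponent_sum.
rewrite !(alternate_morph (big_nil _ _ _ _) exponent_sum_cat) -(odd_double_half k) ok.
have -> : exponent_sum [:: (s, false)] = 1 by rewrite /exponent_sum big_seq1.
have alt_odd (a b : int) l : alternate +%R a b l.*2.+1 = a + (a + b) *+ l.
  elim: l => [|l IHl]; first by rewrite /= !addr0.
  by rewrite doubleS -[LHS]/(a + (b + alternate +%R a b l.*2.+1)) IHl mulrS; ring.
by rewrite !alt_odd (addrC 1 (exponent_sum W)) => /addIr.
Qed.

End Words.

Section Retraction.
Variables (S : finType) (M : coxeter_matrix S) (X : {set S}) (phi : word S -> word S).
Hypothesis phi_congr : forall u v, artin_eq M u v -> artin_eq M (phi u) (phi v).
Hypothesis phi_cat : forall u v, artin_eq M (phi (u ++ v)) (phi u ++ phi v).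
Hypothesis phi_id : forall w, in_parabolic M X w -> artin_eq M (phi w) w.

Lemma retraction_alternate u v k :
  artin_eq M (phi (alternate cat u v k)) (alternate cat (phi u) (phi v) k).
Proof.
elim: k u v => [|k IHk] u v /=.
  by apply: phi_id; exists [::]; split; last exact: ae_refl.
exact: ae_trans (phi_cat _ _) (artin_eq_cat (ae_refl _ _) (IHk _ _)).
Qed.

Lemma retraction_braid s z k W : s \in X -> s != z -> M s z = Some k ->
  artin_eq M (phi [:: (z, false)]) W ->
  artin_eq M (alternate cat [:: (s, false)] W k) (alternate cat W [:: (s, false)] k).
Proof.
move=> sX sz hk phiz.
have phis : artin_eq M (phi [:: (s, false)]) [:: (s, false)].
  by apply: phi_id; exists [:: (s, false)]; rewrite /= sX; split; last exact: ae_refl.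
have := phi_congr (ae_rel sz hk); rewrite !Pi_alternate => braid.
apply: ae_trans (artin_eq_alternate k (ae_sym phis) (ae_sym phiz)) _.
apply: ae_trans (ae_sym (retraction_alternate _ _ _)) _.
apply: ae_trans braid _.
apply: ae_trans (retraction_alternate _ _ _) _.
exact: artin_eq_alternate.
Qed.

End Retraction.

Section GeneratorMatrices.
Variables (R : comNzRingType) (S : finType) (q c : R) (s t : S).

Definition pair_gen_mx (x : S) : 'M[R]_2 :=
  if x == s then mxA q c else if x == t then mxB q c else 1.

Lemma pair_gen_mx_s : pair_gen_mx s = mxA q c.
Proof. by rewrite /pair_gen_mx eqxx. Qed.

Lemma pair_gen_mx_t : s != t -> pair_gen_mx t = mxB q c.
Proof. by move=> st; rewrite /pair_gen_mx eq_sym (negbTE st) eqxx. Qed.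

Lemma det_pair_gen_mx x : x \in [set s; t] -> \det (pair_gen_mx x) = - q.
Proof.
rewrite /pair_gen_mx in_set2; case: ifP => [_ _ | _ /= ->]; [exact: det_mxA | exact: det_mxB].
Qed.

(* Inverse letters use [- adj G = q G^-1] instead of [G^-1], so the entries stay polynomial
   in the parameters. *)
Definition adj_word_mx (w : word S) : 'M[R]_2 :=
  \prod_(l <- w) if l.2 then - \adj (pair_gen_mx l.1) else pair_gen_mx l.1.

End GeneratorMatrices.

Lemma map_adj_word_mx (R R' : comNzRingType) (f : {rmorphism R -> R'})
    (S : finType) (q c : R) (s t : S) w :
  map_mx f (adj_word_mx q c s t w) = adj_word_mx (f q) (f c) s t w.
Proof.
have map_gen x : map_mx f (pair_gen_mx q c s t x) = pair_gen_mx (f q) (f c) s t x.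
  rewrite /pair_gen_mx; case: ifP => _; [|case: ifP => _];
  by rewrite ?map_mx_mxA ?map_mx_mxB ?map_mx1.
rewrite /adj_word_mx (big_morph _ (map_mxM f (m := 2) (n := 2) (p := 2)) (map_mx1 f 2)).
apply: eq_bigr => l _.
by case: l.2; rewrite ?map_mxN ?map_mx_adj map_gen.
Qed.

Section WordMatrices.
Variables (F : fieldType) (S : finType) (q c : F) (s t : S).
Local Notation pair_gen_mx := (pair_gen_mx q c s t).

Definition letter_mx (l : S * bool) : 'M[F]_2 :=
  if l.2 then (pair_gen_mx l.1)^-1 else pair_gen_mx l.1.

Definition word_mx (w : word S) : 'M[F]_2 := \prod_(l <- w) letter_mx l.

Lemma word_mx_cat u v : word_mx (u ++ v) = word_mx u * word_mx v.
Proof. exact: big_cat. Qed.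

Lemma word_mx_alternate u v k :
  word_mx (alternate cat u v k) = alternate *%R (word_mx u) (word_mx v) k.
Proof. exact: (alternate_morph (big_nil _ _ _ _) word_mx_cat). Qed.

Lemma word_mx_Pi k : s != t ->
  word_mx (Pi s t k) = alternate *%R (mxA q c) (mxB q c) k /\
  word_mx (Pi t s k) = alternate *%R (mxB q c) (mxA q c) k.
Proof.
move=> st; rewrite !Pi_alternate !word_mx_alternate /word_mx !big_seq1 /letter_mx /pair_gen_mx /=.
by rewrite eqxx eq_sym (negbTE st) eqxx.
Qed.

Hypothesis q0 : q != 0.

Lemma det_word_mx w : word_on [set s; t] w -> \det (word_mx w) = (- q) ^ exponent_sum w.
Proof.
elim: w => [|l w IHw] /=; first by rewrite /word_mx /exponent_sum !big_nil det1 expr0z.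
case/andP=> ls /IHw detw; rewrite /word_mx big_cons detM -/(word_mx w) detw.
rewrite /exponent_sum big_cons -/(exponent_sum w) expfzDr ?oppr_eq0 //; congr (_ * _).
by rewrite /letter_mx; case: l.2; rewrite ?detV det_pair_gen_mx.
Qed.

Lemma pair_gen_mx_unit x : pair_gen_mx x \is a GRing.unit.
Proof.
by rewrite /pair_gen_mx; case: ifP => _; [|case: ifP => _]; rewrite ?mxA_unit ?mxB_unit ?unitr1.
Qed.

Lemma adj_pair_gen_mx x : x \in [set s; t] -> - \adj (pair_gen_mx x) = q *: (pair_gen_mx x)^-1.
Proof.
move=> xX; apply: (mulrI (pair_gen_mx_unit x)).
rewrite mulrN -scalerAr mulrV ?pair_gen_mx_unit // -mulmxE mul_mx_adj det_pair_gen_mx //.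
by rewrite scalemx1 -raddfN opprK.
Qed.

Lemma adj_word_mxE w : word_on [set s; t] w ->
  adj_word_mx q c s t w = q ^+ count (fun l => l.2) w *: word_mx w.
Proof.
elim: w => [|l w IHw] /=; first by rewrite /adj_word_mx /word_mx !big_nil scale1r.
case/andP=> lX /IHw; rewrite /adj_word_mx /word_mx !big_cons.
rewrite -/(adj_word_mx _ _ _ _ w) -/(word_mx w) => ->.
rewrite -scalerAr exprD mulrC -scalerA; congr (_ *: _).
rewrite /letter_mx; case: l.2 lX => lX; last by rewrite expr0 scale1r.
by rewrite adj_pair_gen_mx // -scalerAl expr1.
Qed.

Hypothesis cq : c = 1 + q.

Lemma pair_gen_mx_ones x : pair_gen_mx x *m const_mx 1 = const_mx 1 :> 'cV[F]_2.
Proof.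
rewrite /pair_gen_mx; case: ifP => _; [|case: ifP => _]; last by rewrite mul1mx.
  by apply/eqP; rewrite mx2_fix_ones cq; apply/andP; split; apply/eqP; ring.
by apply/eqP; rewrite mx2_fix_ones cq; apply/andP; split; apply/eqP; ring.
Qed.

Lemma word_mx_ones w : word_on [set s; t] w -> word_mx w *m const_mx 1 = const_mx 1 :> 'cV[F]_2.
Proof.
elim: w => [|l w IHw] /=; first by rewrite /word_mx big_nil mul1mx.
case/andP=> lX /IHw; rewrite /word_mx big_cons -/(word_mx w) -mulmxE -mulmxA => ->.
rewrite /letter_mx; case: l.2; last exact: pair_gen_mx_ones.
by rewrite -{1}(pair_gen_mx_ones l.1) mulmxA mulmxE mulVr ?pair_gen_mx_unit ?mul1mx.
Qed.
End WordMatrices.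


Section ArtinRepresentation.
Variables (F : fieldType) (S : finType) (M : coxeter_matrix S) (q : F) (c : S -> S -> F).
Hypothesis q0 : q != 0.
Hypothesis c_sym : forall s t, c s t = c t s.
Implicit Types (s t : S) (v : {ffun S -> F}) (L : 'M[F]_2).

Definition rho s v : {ffun S -> F} :=
  [ffun u => if u == s then - q * v s + \sum_(t | t != s) c s t * v t else v u].

Definition rho_inv s v : {ffun S -> F} :=
  [ffun u => if u == s then (\sum_(t | t != s) c s t * v t - v s) / q else v u].

Lemma rhoK s : cancel (rho s) (rho_inv s).
Proof.
move=> v; apply/ffunP => u; rewrite !ffunE; case: eqP => [-> | _] //.
under eq_bigr => x xs do rewrite ffunE (negbTE xs).
by rewrite eqxx; field.
Qed.

Lemma rho_invK s : cancel (rho_inv s) (rho s).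
Proof.
move=> v; apply/ffunP => u; rewrite !ffunE; case: eqP => [-> | _] //.
under [X in _ + X]eq_bigr => x xs do rewrite ffunE (negbTE xs).
by rewrite eqxx; field.
Qed.

Definition artin_act (w : word S) v : {ffun S -> F} :=
  foldr (fun l => if l.2 then rho_inv l.1 else rho l.1) v w.

Lemma artin_act_cat u w v : artin_act (u ++ w) v = artin_act u (artin_act w v).
Proof. exact: foldr_cat. Qed.

Definition plane_disc s t := (1 + q) ^+ 2 - c s t ^+ 2.

Definition off_sum s t v := \sum_(u | (u != s) && (u != t)) c s u * v u.

(* [rho s] and [rho t] move only the [s]- and [t]-coordinates, by affine maps with linear
   parts [mxA q (c s t)] and [mxB q (c s t)] and with the common fixed point
   [plane_center s t v] (when [plane_disc s t != 0]); the orbit of [v] consists of the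
   vectors [plane_act s t v L]. *)
Definition plane_center s t v : F * F :=
  (((1 + q) * off_sum s t v + c s t * off_sum t s v) / plane_disc s t,
   ((1 + q) * off_sum t s v + c s t * off_sum s t v) / plane_disc s t).

Definition plane_act s t v L : {ffun S -> F} :=
  let f := plane_center s t v in
  [ffun u => if u == s then f.1 + L 0 0 * (v s - f.1) + L 0 1 * (v t - f.2)
             else if u == t then f.2 + L 1 0 * (v s - f.1) + L 1 1 * (v t - f.2) else v u].

Lemma sum_neq_split x y (f : S -> F) : x != y ->
  \sum_(u | u != x) f u = f y + \sum_(u | (u != x) && (u != y)) f u.
Proof. by move=> xy; rewrite (bigD1 y) //= eq_sym. Qed.

Section Plane.
Variables (s t : S).
Hypotheses (st : s != t) (D0 : plane_disc s t != 0).

Lemma plane_act1 v : plane_act s t v 1 = v.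
Proof.
apply/ffunP => u; rewrite ffunE !mxE /=.
by case: eqP => [-> | _]; [| case: eqP => [-> | _]]; rewrite // mul1r mul0r; ring.
Qed.

Lemma plane_act_off v L u : u != s -> u != t -> plane_act s t v L u = v u.
Proof. by move=> us ut; rewrite ffunE (negbTE us) (negbTE ut). Qed.

Lemma off_sum_plane_act x y v L : (x == s) && (y == t) || (x == t) && (y == s) ->
  off_sum x y (plane_act s t v L) = off_sum x y v.
Proof.
by case/orP=> /andP [/eqP -> /eqP ->]; apply: eq_bigr => u /andP [u1 u2]; rewrite plane_act_off.
Qed.

Lemma rho_plane_act v L : rho s (plane_act s t v L) = plane_act s t v (mxA q (c s t) * L).
Proof.
have ts : t != s by rewrite eq_sym.
apply/ffunP => u; rewrite ffunE (sum_neq_split _ st) -/(off_sum s t _).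
rewrite off_sum_plane_act ?eqxx //.
rewrite !ffunE [L]mx2_eta /mxA mulmx2 !mxE /= (negbTE ts) eqxx.
case: eqP => _; last by case: eqP => _ //; ring.
by move: D0; rewrite /plane_center /plane_disc /= eqxx => D0'; field.
Qed.

Lemma rho_plane_act_t v L : rho t (plane_act s t v L) = plane_act s t v (mxB q (c s t) * L).
Proof.
have ts : t != s by rewrite eq_sym.
apply/ffunP => u; rewrite ffunE (sum_neq_split _ ts) -/(off_sum t s _).
rewrite off_sum_plane_act ?eqxx ?orbT //.
rewrite !ffunE [L]mx2_eta /mxB mulmx2 !mxE /= !eqxx (c_sym t s).
case: eqP => [-> | _]; last by case: eqP => _ //; ring.
by move: D0; rewrite (negbTE ts) /plane_center /plane_disc /= => D0'; field.
Qed.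

Lemma rho_inv_plane_act v L :
  rho_inv s (plane_act s t v L) = plane_act s t v ((mxA q (c s t))^-1 * L).
Proof.
apply/esym/(canRL (rhoK s)); rewrite rho_plane_act mulrA mulrV ?mul1r //.
exact: mxA_unit.
Qed.

Lemma rho_inv_plane_act_t v L :
  rho_inv t (plane_act s t v L) = plane_act s t v ((mxB q (c s t))^-1 * L).
Proof.
apply/esym/(canRL (rhoK t)); rewrite rho_plane_act_t mulrA mulrV ?mul1r //.
exact: mxB_unit.
Qed.

Lemma artin_act_plane w v : word_on [set s; t] w ->
  artin_act w v = plane_act s t v (word_mx q (c s t) s t w).
Proof.
elim: w => [|[x b] w IHw] /=; first by rewrite /word_mx big_nil plane_act1.
have ts : t != s by rewrite eq_sym.
rewrite in_set2 /word_mx big_cons -/(word_mx _ _ _ _ w) => /andP [/orP [] /eqP -> {x} /IHw ->];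
  rewrite /letter_mx /pair_gen_mx /= ?eqxx ?(negbTE ts); case: b;
  by rewrite ?rho_plane_act ?rho_plane_act_t ?rho_inv_plane_act ?rho_inv_plane_act_t.
Qed.

Lemma artin_act_braid k v :
  alternate *%R (mxA q (c s t)) (mxB q (c s t)) k =
  alternate *%R (mxB q (c s t)) (mxA q (c s t)) k ->
  artin_act (Pi s t k) v = artin_act (Pi t s k) v.
Proof.
have [Pst Pts] := word_mx_Pi q (c s t) k st.
have Xts : word_on [set s; t] (Pi t s k) by rewrite setUC word_on_Pi.
by move=> braid; rewrite !artin_act_plane ?word_on_Pi // Pst Pts braid.
Qed.

End Plane.

Lemma artin_act_congr u w :
  (forall s t k, s != t -> M s t = Some k -> plane_disc s t != 0 /\
     alternate *%R (mxA q (c s t)) (mxB q (c s t)) k =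
     alternate *%R (mxB q (c s t)) (mxA q (c s t)) k) ->
  artin_eq M u w -> artin_act u =1 artin_act w.
Proof.
move=> braid.
elim=> {u w} [w | u w _ IH | u w z _ IH1 _ IH2 | p r u w _ IH | s b | s t k st hk] v //.
- by rewrite IH1 IH2.
- by rewrite !artin_act_cat IH.
- by case: b => /=; rewrite ?rhoK ?rho_invK.
- by have [D0 ABk] := braid s t k st hk; apply: artin_act_braid.
Qed.

Lemma word_mx_eq_of_act s t u w : s != t -> plane_disc s t != 0 ->
  word_on [set s; t] u -> word_on [set s; t] w -> artin_act u =1 artin_act w ->
  word_mx q (c s t) s t u = word_mx q (c s t) s t w.
Proof.
move=> st D0 Xu Xw uw; pose e x : {ffun S -> F} := [ffun y => (y == x)%:R].
have center x : x \in [set s; t] -> plane_center s t (e x) = (0, 0).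
  rewrite in_set2 /plane_center /off_sum => xst.
  rewrite !big1 ?mulr0 ?addr0 ?mul0r // => y /andP [ys yt]; rewrite ffunE;
    by case/orP: xst => /eqP ->; rewrite ?(negbTE ys) ?(negbTE yt) mulr0.
have ts : t != s by rewrite eq_sym.
have := uw (e s); have := uw (e t); rewrite !(artin_act_plane st D0) //.
rewrite /plane_act !center ?set21 ?set22 //=.
move=> /ffunP et /ffunP es; move: (es s) (es t) (et s) (et t).
rewrite !ffunE !eqxx (negbTE st) (negbTE ts) /= !subr0 !mulr1 !mulr0 !add0r !addr0.
by move=> e00 e10 e01 e11; rewrite [LHS]mx2_eta [RHS]mx2_eta e00 e01 e10 e11.
Qed.

End ArtinRepresentation.


Definition zeta (k : nat) : algC := sval (C_prim_root_exists (ltn0Sn (k.*2).-1)).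

Lemma zeta_prim k : (0 < k)%N -> (k.*2).-primitive_root (zeta k).
Proof.
move=> k0; move: (svalP (C_prim_root_exists (ltn0Sn (k.*2).-1))); set z := sval _.
by rewrite prednK ?double_gt0.
Qed.

Lemma zeta_neq0 k : (0 < k)%N -> zeta k != 0.
Proof. by move=> k0; rewrite (prim_root_eq0 (zeta_prim k0)) double_eq0 -lt0n. Qed.

(* [kappa (Some k)] is a Galois conjugate of [2 cos (pi / k)]; [kappa None] (m = oo) is 0. *)
Definition kappa (o : option nat) : algC := if o is Some k then zeta k + (zeta k)^-1 else 0.

Lemma kappa_neq0 m : (2 < m)%N -> kappa (Some m) != 0.
Proof.
move=> m2; have m0 : (0 < m)%N by apply: leq_trans m2.
have z0 := zeta_neq0 m0.
have := primitive_root_neq_inv (primitive_root_sqr (zeta_prim m0)) m2.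
apply: contra_neq => /= h; have z2 : zeta m ^+ 2 = -1.
  have : zeta m * (zeta m + (zeta m)^-1) = 0 by rewrite h mulr0.
  by rewrite mulrDr mulfV // -expr2 => /eqP; rewrite addr_eq0 => /eqP.
by rewrite z2 invrN invr1.
Qed.

Definition rep_coef (S : finType) (M : coxeter_matrix S) (r : algC) (s t : S) : algC :=
  r * kappa (M s t).

Lemma plane_disc_nat (S : finType) (M : coxeter_matrix S) n (s t : S) k :
  (2 <= n)%N -> M s t = Some k -> (0 < k)%N ->
  plane_disc (n%:R ^+ 2) (rep_coef M n%:R) s t != 0.
Proof.
move=> n2 hk k0; have pz := zeta_prim k0; have z0 := zeta_neq0 k0.
have nk : (n ^ (2 * k) != 1 ^ (2 * k))%N.
  by rewrite eqn_exp2r ?muln_gt0 ?k0 //; apply: contraTneq n2 => ->.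
have n2u (u : algC) : u ^+ k = 1 -> 1 - n%:R ^+ 2 * u != 0.
  move=> uk; rewrite subr_eq0; apply: contra_neq nk => nu; rewrite exp1n; apply/eqP.
  rewrite -(pnatr_eq1 algC) natrX exprM -[X in X == _]mulr1 -{2}uk -exprMn -nu.
  by rewrite expr1n.
rewrite /plane_disc /rep_coef hk /=.
rewrite (_ : _ - _ = (1 - n%:R ^+ 2 * zeta k ^+ 2) * (1 - n%:R ^+ 2 * (zeta k ^+ 2)^-1)).
  by rewrite mulf_neq0 ?n2u // ?exprVn prim_expr_order ?invr1 // primitive_root_sqr.
by field.
Qed.

Section NaturalParameter.
Variables (S : finType) (M : coxeter_matrix S) (n : nat).
Hypothesis n2 : (2 <= n)%N.
Local Notation q := (n%:R ^+ 2 : algC).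
Local Notation c := (rep_coef M n%:R).

Lemma nat_param_neq0 : (n%:R : algC) != 0.
Proof. by rewrite pnatr_eq0 -lt0n (leq_trans _ n2). Qed.

Lemma nat_q_neq0 : q != 0.
Proof. by rewrite expf_neq0 ?nat_param_neq0. Qed.

Lemma rep_coef_sym s t : c s t = c t s.
Proof. by rewrite /rep_coef cm_sym. Qed.

Lemma artin_act_congr_nat u w : artin_eq M u w -> artin_act q c u =1 artin_act q c w.
Proof.
apply: (artin_act_congr nat_q_neq0 rep_coef_sym) => s t k st hk.
have k0 : (0 < k)%N by rewrite (leq_trans _ (cm_offdiag st hk)).
split; first exact: plane_disc_nat n2 hk k0.
apply: (dihedral_braid nat_q_neq0 (cm_offdiag st hk) (zeta_prim k0)).
by rewrite /rep_coef hk exprMn.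
Qed.

Lemma braid_word_mx_nat x y s W k m : x != y -> M x y = Some m -> s \in [set x; y] ->
  word_on [set x; y] W ->
  artin_eq M (alternate cat [:: (s, false)] W k) (alternate cat W [:: (s, false)] k) ->
  alternate *%R (pair_gen_mx q (c x y) x y s) (word_mx q (c x y) x y W) k =
  alternate *%R (word_mx q (c x y) x y W) (pair_gen_mx q (c x y) x y s) k.
Proof.
move=> xy hm sX XW /artin_act_congr_nat braid.
have m0 : (0 < m)%N by rewrite (leq_trans _ (cm_offdiag xy hm)).
have Xs : word_on [set x; y] [:: (s, false)] by rewrite /word_on /= sX.
have := word_mx_eq_of_act nat_q_neq0 rep_coef_sym xy (plane_disc_nat n2 hm m0)
  (word_on_alternate _ Xs XW) (word_on_alternate _ XW Xs) braid.
by rewrite !word_mx_alternate /word_mx big_seq1.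
Qed.

End NaturalParameter.

Lemma poly_nat_roots_eq0 (F : numFieldType) (G : {poly F}) :
  (forall n, (2 <= n)%N -> G.[n%:R] = 0) -> G = 0.
Proof.
move=> G0; apply/eqP; apply: contraT => nG.
have := max_poly_roots nG (rs := [seq i.+2%:R | i <- iota 0 (size G)]).
rewrite size_map size_iota ltnn; apply.
  by apply/allP => z /mapP [i _ ->]; rewrite /root G0.
by rewrite map_inj_uniq ?iota_uniq // => i j /eqP; rewrite eqr_nat => /eqP [].
Qed.

(* If [g.[n] / n ^+ d] takes values in the finite zero set of [Q] for all [n >= 2], then
   [g - z *: 'X^d] has infinitely many roots for one of these values [z]. *)
Lemma poly_ratio_nat_const (C : numClosedFieldType) (g Q : {poly C}) d : Q != 0 ->
  (forall n, (2 <= n)%N -> root Q (g.[n%:R] / n%:R ^+ d)) ->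
  exists z, forall r, r != 0 -> g.[r] / r ^+ d = z.
Proof.
move=> Q0 rootQ; have [rs defQ] := closed_field_poly_normal Q.
suff [z gz] : exists z, g = z *: 'X^d.
  by exists z => r r0; rewrite gz hornerZ hornerXn mulfK // expf_neq0.
have : \prod_(z <- rs) (g - z *: 'X^d) = 0.
  apply: poly_nat_roots_eq0 => n n2.
  have n0 : (n%:R : C) ^+ d != 0 by rewrite expf_neq0 // pnatr_eq0 -lt0n (leq_trans _ n2).
  move: (rootQ n n2); rewrite /root {1}defQ hornerZ horner_prod mulf_eq0 lead_coef_eq0.
  rewrite (negbTE Q0) prodf_seq_eq0 => /hasP [z zrs /=]; rewrite !hornerE subr_eq0 => /eqP gn.
  rewrite horner_prod; apply/eqP; rewrite prodf_seq_eq0; apply/hasP; exists z => //=.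
  by rewrite !hornerE -gn mulfVK // subrr.
by move/eqP; rewrite prodf_seq_eq0 => /hasP [z _ /=]; rewrite subr_eq0 => /eqP ->; exists z.
Qed.

Section OddPair.
Variables (S : finType) (M : coxeter_matrix S) (x y : S) (m : nat) (W : word S).
Hypotheses (hm : M x y = Some m) (m2 : (2 < m)%N) (om : odd m).
Hypotheses (XW : word_on [set x; y] W) (eW : exponent_sum W = 1).

Local Notation Amx r := (mxA (r ^+ 2) (rep_coef M r x y)).
Local Notation Xmx r := (word_mx (r ^+ 2) (rep_coef M r x y) x y W).
Local Notation Ymx r := ((r ^+ 2)^-1 *: (Amx r * Xmx r)).

Lemma det_Ymx (r : algC) : r != 0 -> \det (Ymx r) = 1.
Proof.
move=> r0; have q0 : r ^+ 2 != 0 by rewrite expf_neq0.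
by rewrite detZ detM det_mxA (det_word_mx _ q0 XW) eW expr1z; field.
Qed.

(* At [r = zeta m] the coefficient [rep_coef M r x y] equals [1 + r ^+ 2], and then every
   generator matrix fixes the vector (1, 1). *)
Lemma tr_Ymx_zeta : \tr (Ymx (zeta m)) = zeta m ^+ 2 + (zeta m ^+ 2)^-1.
Proof.
have m0 : (0 < m)%N by rewrite (leq_trans _ m2).
have z0 := zeta_neq0 m0; have q0 : zeta m ^+ 2 != 0 by rewrite expf_neq0.
have cq : rep_coef M (zeta m) x y = 1 + zeta m ^+ 2 by rewrite /rep_coef hm /=; field.
have fixAX : Amx (zeta m) * Xmx (zeta m) *m const_mx 1 = const_mx 1 :> 'cV_2.
  rewrite -mulmxE -mulmxA (word_mx_ones q0 cq XW).
  by rewrite -(pair_gen_mx_s _ (rep_coef M (zeta m) x y) x y) (pair_gen_mx_ones _ _ cq).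
rewrite mxtraceZ (tr_mx2_fix_ones fixAX) detM det_mxA (det_word_mx _ q0 XW) eW expr1z.
by field.
Qed.

Lemma tr_Ymx_poly :
  exists (g : {poly algC}) d, forall r, r != 0 -> \tr (Ymx r) = g.[r] / r ^+ d.
Proof.
set c := 'X * (kappa (M x y))%:P.
exists (\tr (mxA 'X^2 c * adj_word_mx 'X^2 c x y W)), (2 * (count snd W).+1)%N => r r0.
have q0 : r ^+ 2 != 0 by rewrite expf_neq0.
rewrite -[_.[r]]/(horner_eval r _) -trace_map_mx map_mxM map_mx_mxA map_adj_word_mx /=.
rewrite !horner_evalE /c !hornerE (adj_word_mxE _ q0 XW) -mulmxE -scalemxAr !mxtraceZ.
by rewrite exprM [X in _ / X]exprS; field; rewrite expf_neq0.
Qed.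

Lemma tr_Ymx_const (Q : {poly algC}) : Q != 0 ->
  (forall n, (2 <= n)%N -> root Q (\tr (Ymx n%:R))) ->
  \tr (Ymx 2%:R) = zeta m ^+ 2 + (zeta m ^+ 2)^-1.
Proof.
move=> Q0 rootQ; have [g [d trg]] := tr_Ymx_poly.
have [z gz] : exists z, forall r, r != 0 -> g.[r] / r ^+ d = z.
  by apply: (poly_ratio_nat_const Q0) => n n2; rewrite -trg ?nat_param_neq0 ?rootQ.
have z0 : zeta m != 0 by rewrite zeta_neq0 // (leq_trans _ m2).
by rewrite -tr_Ymx_zeta !trg ?gz ?nat_param_neq0.
Qed.

Lemma dvdn_scalar_Ymx p : odd p ->
  (forall n, (2 <= n)%N -> is_scalar_mx (Ymx n%:R ^+ p)) -> (m %| p)%N.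
Proof.
move=> op scY; have p0 : (0 < p)%N by rewrite lt0n; apply: contraTneq op => ->.
pose Q : {poly algC} := cheb 'X p * ('X^2 - 4%:P).
have chebX (t : algC) : (cheb 'X p).[t] = cheb t p.
  by rewrite -horner_evalE rmorph_cheb; congr cheb; exact: hornerX.
have Q0 : Q != 0.
  rewrite mulf_neq0 //; apply/eqP.
    move/(congr1 (horner ^~ 2)) => /eqP; rewrite /= chebX cheb_two horner0 pnatr_eq0.
    by move=> /eqP p00; rewrite p00 in p0.
  move/(congr1 (horner ^~ 0)) => /eqP; rewrite /= !hornerE expr0n /= sub0r oppr_eq0.
  by rewrite pnatr_eq0.
have rootQ n : (2 <= n)%N -> root Q (\tr (Ymx n%:R)).
  move=> n2; move: (scY n n2); rewrite -(prednK p0).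
  move=> /(scalar_pow_mx2 (det_Ymx (nat_param_neq0 n2))).
  rewrite /root /Q hornerM chebX (prednK p0) => -[-> | /tr_scalar_mx2]; first by rewrite mul0r.
  by rewrite det_Ymx ?nat_param_neq0 // !hornerE => ->; rewrite subrr mulr0.
have pz := primitive_root_sqr (zeta_prim (leq_trans (isT : 0 < 3)%N m2)).
apply: (dvdn_scalar_pow_mx2 pz m2 om (det_Ymx (nat_param_neq0 (leqnn 2)))).
  exact: tr_Ymx_const Q0 rootQ.
exact: scY.
Qed.

End OddPair.

Lemma retraction_braiding_word (S : finType) (M : coxeter_matrix S) (x y z : S) kx ky :
  has_retraction M [set x; y] -> x != z -> y != z -> M x z = Some kx -> M y z = Some ky ->
  exists2 W, word_on [set x; y] W &
    artin_eq M (alternate cat [:: (x, false)] W kx) (alternate cat W [:: (x, false)] kx) /\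
    artin_eq M (alternate cat [:: (y, false)] W ky) (alternate cat W [:: (y, false)] ky).
Proof.
case=> phi [phi_congr phi_cat phi_X phi_id] xz yz hx hy.
have [W [XW phiW]] := phi_X [:: (z, false)].
by exists W => //; split; apply: (retraction_braid phi_congr phi_cat phi_id (z := z));
  rewrite ?set21 ?set22.
Qed.

Lemma odd_coxeter_dvdn (S : finType) (M : coxeter_matrix S) (x y z : S) mxy mxz myz :
  parabolic_retractable M -> x != y -> x != z -> y != z ->
  M x y = Some mxy -> M x z = Some mxz -> M y z = Some myz ->
  odd mxy -> odd mxz -> odd myz -> (mxy %| mxz)%N || (mxy %| myz)%N.
Proof.
move=> HR xy xz yz hxy hxz hyz oxy oxz oyz.
have m2 : (2 < mxy)%N by move: (cm_offdiag xy hxy) oxy; rewrite leq_eqVlt => /orP [/eqP <- |].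
have [W XW [braid_x braid_y]] := retraction_braiding_word (HR _) xz yz hxz hyz.
have eW := exponent_sum_braid_odd oxz braid_x.
have [_ | nd] := boolP (mxy %| myz)%N; [by rewrite orbT | rewrite orbF].
apply: (dvdn_scalar_Ymx hxy m2 oxy XW eW oxz) => n n2.
have q0 := nat_q_neq0 n2; set c := rep_coef M n%:R x y.
have c0 : c != 0 by rewrite /c /rep_coef hxy mulf_neq0 ?nat_param_neq0 ?kappa_neq0.
have detX := det_word_mx c q0 XW; rewrite eW expr1z in detX.
have AX := braid_word_mx_nat n2 xy hxy (set21 x y) XW braid_x; rewrite pair_gen_mx_s in AX.
have BX := braid_word_mx_nat n2 xy hxy (set22 x y) XW braid_y; rewrite pair_gen_mx_t // in BX.
case: (odd_braid_dichotomy q0 c0 detX oxz oyz AX BX) => // scAB.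
have hc : c ^+ 2 = n%:R ^+ 2 * kappa (Some mxy) ^+ 2 by rewrite /c /rep_coef hxy exprMn.
have m0 : (0 < mxy)%N by rewrite (leq_trans _ m2).
by rewrite (dvdn_scalar_braid_power q0 (zeta_prim m0) m2 oxy hc scAB) in nd.
Qed.

Local Close Scope ring_scope.

Lemma dvdn_cycle3 (a b c : nat) :
  (a %| b) || (a %| c) -> (b %| a) || (b %| c) -> (c %| a) || (c %| b) ->
  [\/ a = b /\ (c %| a), a = c /\ (b %| a) | b = c /\ (a %| b)].
Proof.
have anti u v : u %| v -> v %| u -> u = v by move=> uv vu; apply/eqP; rewrite eqn_dvd uv vu.
case/orP=> [ab | ac] /orP [ba | bc] /orP [ca | cb].
- by move: (anti _ _ ab ba) => e; subst; constructor 1.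
- by move: (anti _ _ ab ba) => e; subst; constructor 1.
- by move: (anti _ _ ab (dvdn_trans bc ca)) => e; subst; constructor 1.
- by move: (anti _ _ bc cb) => e; subst; constructor 3.
- by move: (anti _ _ ac ca) => e; subst; constructor 2.
- by move: (anti _ _ ac (dvdn_trans cb ba)) => e; subst; constructor 2.
- by move: (anti _ _ ac ca) => e; subst; constructor 2.
- by move: (anti _ _ bc cb) => e; subst; constructor 3.
Qed.

Theorem lemma3p5 (S : finType) (M : coxeter_matrix S) (a b c : S)
  (mab mac mbc : nat) :
  parabolic_retractable M ->
  a != b -> a != c -> b != c ->
  M a b = Some mab -> M a c = Some mac -> M b c = Some mbc ->
  odd mab -> odd mac -> odd mbc ->
  [\/ mab = mac /\ (mbc %| mab),
      mab = mbc /\ (mac %| mab)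
    | mac = mbc /\ (mab %| mac)].
Proof.
move=> HR ab ac bc hab hac hbc oab oac obc.
have hba : M b a = Some mab by rewrite cm_sym.
have hca : M c a = Some mac by rewrite cm_sym.
have hcb : M c b = Some mbc by rewrite cm_sym.
apply: dvdn_cycle3.
- exact: odd_coxeter_dvdn HR ab ac bc hab hac hbc oab oac obc.
- by apply: odd_coxeter_dvdn HR ac ab _ hac hab hcb oac oab obc; rewrite eq_sym.
- by apply: odd_coxeter_dvdn HR bc _ _ hbc hba hca obc oab oac; rewrite eq_sym.
Qed.
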